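(* Assume Schanuel's conjecture $(S)$. Let $\alpha,\beta,\gamma$ be nonzero complex numbers with $\alpha\neq 1$ and $\beta^{\gamma}\neq 1$. Suppose that at least one of $\alpha$ and $\beta^{\gamma}$ is irrational, and at least one of them is algebraic. If $\beta^{\gamma\alpha}$ is algebraic, then $\alpha^{\beta^{\gamma}}$ is transcendental.
   Context: Schanuel's conjecture $(S)$: if $\alpha_1,\dots,\alpha_n\in\mathbb{C}$ are linearly independent over $\mathbb{Q}$, then the transcendence degree of $\mathbb{Q}(\alpha_1,\dots,\alpha_n,e^{\alpha_1},\dots,e^{\alpha_n})$ over $\mathbb{Q}$ is at least $n$. Powers: fix a determination $\log\beta$ and $\log\alpha$; $\beta^{\gamma}:=e^{\gamma\log\beta}$, $\beta^{\gamma\alpha}:=e^{\gamma\alpha\log\beta}$ (i.e. $(\beta^\gamma)^\alpha$ computed with $\log(\beta^\gamma)=\gamma\log\beta$), and $\alpha^{\beta^{\gamma}}:=e^{\beta^{\gamma}\log\alpha}$. *)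

From Stdlib Require Import Reals QArith List.
Open Scope R_scope.

Record Cplx : Type := mkC { cre : R; cim : R }.

Definition Czero : Cplx := mkC 0 0.
Definition Cone : Cplx := mkC 1 0.
Definition Cadd (z w : Cplx) : Cplx := mkC (cre z + cre w) (cim z + cim w).
Definition Cmul (z w : Cplx) : Cplx :=
  mkC (cre z * cre w - cim z * cim w) (cre z * cim w + cim z * cre w).
Fixpoint Cpow (z : Cplx) (n : nat) : Cplx :=
  match n with O => Cone | S k => Cmul z (Cpow z k) end.
Definition Cexp (z : Cplx) : Cplx :=
  mkC (exp (cre z) * cos (cim z)) (exp (cre z) * sin (cim z)).
Definition CofQ (q : Q) : Cplx := mkC (Q2R q) 0.

Definition Csum (l : list Cplx) : Cplx := fold_right Cadd Czero l.

Definition is_rational (z : Cplx) : Prop := exists q : Q, z = CofQ q.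

(** evaluation of the univariate polynomial with coefficient list
    [p_0; p_1; ...] (constant term first) at z *)
Fixpoint poly_eval (p : list Q) (z : Cplx) : Cplx :=
  match p with
  | nil => Czero
  | c :: p' => Cadd (CofQ c) (Cmul z (poly_eval p' z))
  end.

Definition poly_nonzero (p : list Q) : Prop := exists c, In c p /\ ~ (c == 0)%Q.

Definition is_algebraic (z : Cplx) : Prop :=
  exists p : list Q, poly_nonzero p /\ poly_eval p z = Czero.

(** a monomial is a coefficient together with an exponent vector *)
Definition monomial_eval (e : list nat) (xs : list Cplx) : Cplx :=
  fold_right Cmul Cone (map (fun p => Cpow (fst p) (snd p)) (combine xs e)).

Definition mpoly_eval (P : list (Q * list nat)) (xs : list Cplx) : Cplx :=
  Csum (map (fun m => Cmul (CofQ (fst m)) (monomial_eval (snd m) xs)) P).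

(** [P] is a (representation of a) nonzero polynomial in [n] variables:
    nonempty list of monomials with pairwise distinct exponent vectors of
    length [n] and nonzero coefficients *)
Definition mpoly_nonzero (n : nat) (P : list (Q * list nat)) : Prop :=
  P <> nil /\ NoDup (map snd P) /\
  (forall m, In m P -> ~ (fst m == 0)%Q /\ length (snd m) = n).

Definition alg_indep (xs : list Cplx) : Prop :=
  forall P, mpoly_nonzero (length xs) P -> mpoly_eval P xs <> Czero.

(** transcendence degree of Q(S) over Q is at least n
    (a transcendence basis can be extracted from the generators S) *)
Definition trdeg_ge (S : list Cplx) (n : nat) : Prop :=
  exists ys : list Cplx, length ys = n /\ (forall y, In y ys -> In y S) /\ alg_indep ys.

Definition Q_lin_indep (alphas : list Cplx) : Prop :=
  forall qs : list Q, length qs = length alphas ->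
    Csum (map (fun p => Cmul (CofQ (fst p)) (snd p)) (combine qs alphas)) = Czero ->
    forall q, In q qs -> (q == 0)%Q.

Definition Schanuel : Prop :=
  forall alphas : list Cplx, Q_lin_indep alphas ->
    trdeg_ge (alphas ++ map Cexp alphas) (length alphas).

From Stdlib Require Import Reals QArith List Lia Lra Qreals Field Classical.
From mathcomp Require ssreflect ssrbool ssrfun eqtype ssrnat seq.
From mathcomp Require ssralg ssrnum poly mxpoly rat ssrint.
From mathcomp.real_closed Require complex.
From mathcomp.reals_stdlib Require Rstruct.
Open Scope R_scope.

(** Put [L = γ log β], so that [b := β^γ = e^L], [α = e^A] with [A = log α],
    [β^(γα) = e^(αL)] and [α^(β^γ) = e^(bA)]; the hypotheses are symmetric under
    [(α, L) <-> (b, A)]. Suppose [e^(αL)] and [e^(bA)] are both algebraic.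
    If [α] and [b] are both algebraic, the irrational one contradicts Gelfond-Schneider,
    which is Schanuel's conjecture for the pair [(L, αL)]. Otherwise, by symmetry, [α] is
    algebraic and [b] is transcendental; [α] is irrational, since [e^(qL)] algebraic with
    [q] rational forces [e^L] algebraic. Now Schanuel's conjecture for [(L, αL, A, bA)], or,
    if these are Q-linearly dependent, for a suitable independent triple, asks for more
    algebraically independent numbers than the generators can provide: all of them are
    algebraic over [Q(L, A, b)], or over a two-generated field when a dependence holds.
    Each time this is checked by enumerating the possible transcendence bases and
    exhibiting an explicit polynomial relation. *)

Lemma Cplx_ext (z w : Cplx) : cre z = cre w -> cim z = cim w -> z = w.
Proof. destruct z, w; simpl; intros; subst; reflexivity. Qed.

Definition Copp (z : Cplx) : Cplx := mkC (- cre z) (- cim z).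
Definition Csub (z w : Cplx) : Cplx := Cadd z (Copp w).
Definition Cinv (z : Cplx) : Cplx :=
  mkC (cre z / (cre z * cre z + cim z * cim z)) (- cim z / (cre z * cre z + cim z * cim z)).
Definition Cdiv (z w : Cplx) : Cplx := Cmul z (Cinv w).

Lemma Cring_theory : ring_theory Czero Cone Cadd Cmul Csub Copp (@eq Cplx).
Proof.
  constructor; intros; apply Cplx_ext; destruct x; try destruct y; try destruct z;
  unfold Cadd, Cmul, Csub, Copp, Czero, Cone; simpl; ring.
Qed.

Lemma Cone_neq0 : Cone <> Czero.
Proof. intro H. injection H. lra. Qed.

Lemma Cnorm2_neq0 (z : Cplx) : z <> Czero -> cre z * cre z + cim z * cim z <> 0.
Proof.
  destruct z as [a b]; simpl; intros Hz E. apply Hz.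
  assert (a = 0) by nra. assert (b = 0) by nra. subst. reflexivity.
Qed.

Lemma Cfield_theory : field_theory Czero Cone Cadd Cmul Csub Copp Cdiv Cinv (@eq Cplx).
Proof.
  constructor.
  - exact Cring_theory.
  - exact Cone_neq0.
  - reflexivity.
  - intros z Hz. apply Cnorm2_neq0 in Hz. destruct z as [a b].
    apply Cplx_ext; unfold Cinv, Cmul, Cone; simpl in *; field; auto.
Qed.

Add Field Cfield : Cfield_theory.

Lemma Cmul_eq0 (x z : Cplx) : z <> Czero -> Cmul x z = Czero -> x = Czero.
Proof.
  intros Hz E. replace x with (Cmul (Cmul x z) (Cinv z)) by (field; auto).
  rewrite E. ring.
Qed.

(** Algebraic numbers are transferred to [R[i]], where they form a field. *)
Module Transfer.
Import ssreflect ssrbool ssrfun eqtype ssrnat seq.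
Import ssralg ssrnum poly mxpoly rat ssrint complex Rstruct.
Import GRing.Theory Num.Theory.
Local Open Scope ring_scope. Local Open Scope complex_scope.
Local Notation Q0 := (Qmake Z0 xH).

Definition toC (z : Cplx) : R[i] := Complex (cre z) (cim z).

Lemma toC_add z w : toC (Cadd z w) = toC z + toC w. Proof. by []. Qed.
Lemma toC_mul z w : toC (Cmul z w) = toC z * toC w. Proof. by []. Qed.
Lemma toC0 : toC Czero = 0. Proof. by []. Qed.
Lemma toC_inj : injective toC.
Proof. by case=> a b [c d] [-> ->]. Qed.
Lemma toC_inv z : toC (Cinv z) = (toC z)^-1.
Proof.
case: z => a b; rewrite /toC /Cinv /= /GRing.inv /= !expr2.
by rewrite /Rdiv -Ropp_mult_distr_l.
Qed.

Definition int_of_Z (z : Z) : int :=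
  match z with Z0 => 0 | Zpos p => Posz (Pos.to_nat p) | Zneg p => - Posz (Pos.to_nat p) end.

Lemma int_of_ZE z : ((int_of_Z z)%:~R : R) = IZR z.
Proof.
case: z => [|p|p] //=; first by rewrite IZRposE INRE Pos_to_natE.
by rewrite mulrNz /IZR -INR_IPR INRE.
Qed.

Lemma int_of_Z_surj (i : int) : exists z, int_of_Z z = i.
Proof.
case: i => [[|n]|n]; first by exists Z0.
- exists (Zpos (Pos.of_nat n.+1)).
  by change (Posz (Pos.to_nat (Pos.of_nat n.+1)) = n.+1); rewrite Nat2Pos.id.
- exists (Zneg (Pos.of_nat n.+1)).
  by change (- Posz (Pos.to_nat (Pos.of_nat n.+1)) = Negz n); rewrite Nat2Pos.id // NegzE.
Qed.

Definition rat_of_Q (q : Q) : rat := (int_of_Z (Qnum q))%:~R / (Pos.to_nat (Qden q))%:R.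

Lemma rat_of_QE q : ratr (rat_of_Q q) = Q2R q :> R.
Proof. by rewrite /rat_of_Q /Q2R fmorph_div /= ratr_int ratr_nat int_of_ZE -INRE INR_IPR. Qed.

Lemma rat_of_Q_surj (r : rat) : exists q, rat_of_Q q = r.
Proof.
have [z Hz] := int_of_Z_surj (numq r).
have := denq_gt0 r; case E: (denq r) => [n|n] //= n_gt0.
have n_neq0 : n <> 0%N by move=> n0; rewrite n0 in n_gt0.
exists (Qmake z (Pos.of_nat n)).
by rewrite /rat_of_Q /= Hz Nat2Pos.id // -[RHS]divq_num_den E.
Qed.

Lemma rat_of_Q_eq0 q : (rat_of_Q q == 0) = Qeq_bool q 0.
Proof.
apply/idP/idP => [/eqP h | /Qeq_bool_iff h].
- apply/Qeq_bool_iff/eqR_Qeq; by rewrite -rat_of_QE h rmorph0 /Q2R /= Rmult_0_l.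
- have := rat_of_QE q; rewrite (Qeq_eqR _ _ h) /Q2R /= Rmult_0_l => E.
  by move/eqP: E; rewrite fmorph_eq0.
Qed.

Lemma toC_CofQ q : toC (CofQ q) = ratr (rat_of_Q q).
Proof.
have -> : toC (CofQ q) = (Q2R q)%:C by [].
by rewrite -rat_of_QE (fmorph_rat (real_complex R)).
Qed.

Definition polyQ (p : list Q) : {poly rat} := Poly (map rat_of_Q p).

Lemma toC_poly_eval p z : toC (poly_eval p z) = (map_poly ratr (polyQ p)).[toC z].
Proof.
elim: p => [|c p IH] /=; first by rewrite /polyQ /= rmorph0 horner0.
rewrite /polyQ /= cons_poly_def rmorphD rmorphM /= map_polyX map_polyC /=.
by rewrite hornerD hornerM hornerX hornerC toC_add toC_mul toC_CofQ -IH addrC mulrC.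
Qed.

Lemma polyQ_neq0 p : poly_nonzero p -> polyQ p != 0.
Proof.
move=> [c [Hin Hc]]; apply/eqP => H0.
have Hn i : nth 0 (map rat_of_Q p) i = 0 by rewrite -coef_Poly -/(polyQ p) H0 coef0.
elim: p Hin Hn {H0} => [|a p IH] //= [->|Hin] Hn.
- by apply: Hc; apply/Qeq_bool_iff; rewrite -rat_of_Q_eq0; apply/eqP; apply: (Hn 0%N).
- by apply: IH => // i; apply: (Hn i.+1).
Qed.

Lemma algebraic_toC z : is_algebraic z <-> algebraicOver (@ratr R[i]) (toC z).
Proof.
split => [[p [nz root_p]] | [rp nz rt]].
  by exists (polyQ p); [exact: polyQ_neq0 | rewrite /root -toC_poly_eval root_p toC0].
have [l Hl] : exists l, map rat_of_Q l = polyseq rp.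
  elim: (polyseq rp) => [|a s [l Hl]]; first by exists nil.
  by have [q Hq] := rat_of_Q_surj a; exists (q :: l); rewrite /= Hq Hl.
have Hp : polyQ l = rp by rewrite /polyQ Hl polyseqK.
exists l; split; last by apply: toC_inj; rewrite toC_poly_eval Hp toC0; apply/eqP.
have sz : (0 < size l)%N by rewrite -(size_map rat_of_Q) Hl size_poly_gt0.
have nth_eq k : List.nth k l Q0 = seq.nth Q0 l k by elim: l {Hl Hp sz} k => [|x l IH] [|k] //=.
exists (List.nth (size l).-1 l Q0); split.
  by apply: List.nth_In; apply/ltP; rewrite ltn_predL.
move/Qeq_bool_iff; rewrite -rat_of_Q_eq0 nth_eq -(nth_map _ 0) ?prednK // Hl.
by rewrite -(size_map rat_of_Q) Hl -lead_coefE lead_coef_eq0 (negPf nz).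
Qed.

Lemma exists_not_root p : poly_nonzero p -> exists t, poly_eval p t <> Czero.
Proof.
move=> /polyQ_neq0 nz; set mp := map_poly (@ratr R[i]) (polyQ p).
have nzm : mp != 0 by rewrite map_poly_eq0.
set rs := [seq (k%:R : R[i]) | k <- iota 0 (size mp)].
have /allPn [_ /mapP [k _ ->] Hk] : ~~ all (root mp) rs.
  apply/negP => Hall.
  have U : uniq rs by rewrite map_inj_uniq ?iota_uniq // => m n /eqP; rewrite eqr_nat => /eqP.
  by have := max_poly_roots nzm Hall U; rewrite size_map size_iota ltnn.
exists (mkC (INR k) 0) => H; move: Hk.
have -> : k%:R = toC (mkC (INR k) 0) by rewrite /toC INRE -(rmorph_nat (real_complex R)).
by rewrite /root /mp -toC_poly_eval H toC0 eqxx.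
Qed.

Lemma is_algebraic_add z w : is_algebraic z -> is_algebraic w -> is_algebraic (Cadd z w).
Proof. by rewrite !algebraic_toC toC_add; apply: algebraic_add. Qed.
Lemma is_algebraic_mul z w : is_algebraic z -> is_algebraic w -> is_algebraic (Cmul z w).
Proof. by rewrite !algebraic_toC toC_mul; apply: algebraic_mul. Qed.
Lemma is_algebraic_inv z : is_algebraic z -> is_algebraic (Cinv z).
Proof. by rewrite !algebraic_toC toC_inv; apply: algebraic_inv. Qed.
End Transfer.

Import Transfer (is_algebraic_add, is_algebraic_mul, is_algebraic_inv, exists_not_root).

Lemma CofQ_add q r : CofQ (q + r) = Cadd (CofQ q) (CofQ r).
Proof. apply Cplx_ext; simpl; [rewrite Q2R_plus|]; ring. Qed.
Lemma CofQ_mul q r : CofQ (q * r) = Cmul (CofQ q) (CofQ r).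
Proof. apply Cplx_ext; simpl; [rewrite Q2R_mult|]; ring. Qed.
Lemma CofQ_opp q : CofQ (- q) = Copp (CofQ q).
Proof. apply Cplx_ext; simpl; [rewrite Q2R_opp|]; ring. Qed.
Lemma CofQ_1 : CofQ 1 = Cone.
Proof. apply Cplx_ext; simpl; [unfold Q2R; simpl; field|reflexivity]. Qed.
Lemma CofQ_eq0 q : (q == 0)%Q -> CofQ q = Czero.
Proof.
  intro H. apply Cplx_ext; simpl; [|reflexivity].
  rewrite (Qeq_eqR _ _ H). unfold Q2R; simpl; ring.
Qed.
Lemma CofQ_0 : CofQ 0 = Czero.
Proof. apply CofQ_eq0. reflexivity. Qed.
Lemma CofQ_inv q : ~ (q == 0)%Q -> CofQ (/ q) = Cinv (CofQ q).
Proof.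
  intro H. assert (Q2R q <> 0) as H'.
  { intro E. apply H, eqR_Qeq. rewrite E. unfold Q2R; simpl; ring. }
  apply Cplx_ext; unfold Cinv; simpl; rewrite ?Q2R_inv by auto; field; auto.
Qed.
Lemma CofQ_inj q r : CofQ q = CofQ r -> (q == r)%Q.
Proof. intro H. apply eqR_Qeq. change (cre (CofQ q) = cre (CofQ r)). rewrite H; reflexivity. Qed.
Lemma CofQ_neq0 q : ~ (q == 0)%Q -> CofQ q <> Czero.
Proof. intros H E. apply H, CofQ_inj. rewrite E. symmetry. apply CofQ_eq0. reflexivity. Qed.

Lemma is_algebraic_CofQ q : is_algebraic (CofQ q).
Proof.
  exists ((- q)%Q :: 1%Q :: nil). split.
  - exists 1%Q. split; [simpl; auto | discriminate].
  - cbn [poly_eval]. rewrite CofQ_opp, CofQ_1. field.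
Qed.

Lemma is_algebraic_one : is_algebraic Cone.
Proof. rewrite <- CofQ_1. apply is_algebraic_CofQ. Qed.
Lemma is_algebraic_opp z : is_algebraic z -> is_algebraic (Copp z).
Proof.
  intro H. replace (Copp z) with (Cmul (CofQ (- (1))) z).
  - apply is_algebraic_mul; [apply is_algebraic_CofQ | exact H].
  - rewrite CofQ_opp, CofQ_1. ring.
Qed.
Lemma is_algebraic_div z w : is_algebraic z -> is_algebraic w -> is_algebraic (Cdiv z w).
Proof. intros; apply is_algebraic_mul, is_algebraic_inv; assumption. Qed.
Lemma is_algebraic_pow z n : is_algebraic z -> is_algebraic (Cpow z n).
Proof. intro H. induction n; simpl. apply is_algebraic_one. apply is_algebraic_mul; auto. Qed.

Ltac solve_algebraic :=
  solve [repeat first [ assumption | apply is_algebraic_mul | apply is_algebraic_div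
    | apply is_algebraic_inv | apply is_algebraic_add | apply is_algebraic_opp
    | apply is_algebraic_CofQ | apply is_algebraic_one ]].

Lemma Cpow_add z m n : Cpow z (m + n) = Cmul (Cpow z m) (Cpow z n).
Proof. induction m; simpl; [ring | rewrite IHm; ring]. Qed.
Lemma Cpow_one n : Cpow Cone n = Cone.
Proof. induction n; simpl; [reflexivity | rewrite IHn; ring]. Qed.

Lemma poly_eval_app l1 l2 z :
  poly_eval (l1 ++ l2) z = Cadd (poly_eval l1 z) (Cmul (Cpow z (length l1)) (poly_eval l2 z)).
Proof. induction l1; simpl; [ring | rewrite IHl1; ring]. Qed.
Lemma poly_eval_zeros k z : poly_eval (repeat 0%Q k) z = Czero.
Proof. induction k; simpl; [reflexivity | rewrite IHk, CofQ_eq0 by reflexivity; ring]. Qed.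

Fixpoint poly_comp_pow (m : nat) (p : list Q) : list Q :=
  match p with nil => nil | c :: p' => c :: repeat 0%Q m ++ poly_comp_pow m p' end.

Lemma poly_eval_comp_pow m p z : poly_eval (poly_comp_pow m p) z = poly_eval p (Cpow z (S m)).
Proof.
  induction p; simpl; [reflexivity|].
  rewrite poly_eval_app, poly_eval_zeros, IHp, repeat_length. simpl. ring.
Qed.

Lemma In_poly_comp_pow m p c : In c p -> In c (poly_comp_pow m p).
Proof.
  induction p as [|c' p IH]; simpl; [contradiction|].
  intros [<-|Hc]; [now left | right; apply in_or_app; right; auto].
Qed.

Lemma is_algebraic_pow_inv z n : is_algebraic (Cpow z (S n)) -> is_algebraic z.
Proof.
  intros [p [[c [Hc Hc0]] Hp]]. exists (poly_comp_pow n p). split.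
  - exists c. split; [apply In_poly_comp_pow |]; assumption.
  - rewrite poly_eval_comp_pow. exact Hp.
Qed.

Lemma Cexp_add z w : Cexp (Cadd z w) = Cmul (Cexp z) (Cexp w).
Proof.
  destruct z as [a b], w as [c d]. apply Cplx_ext; simpl;
  rewrite exp_plus; [rewrite cos_plus | rewrite sin_plus]; ring.
Qed.
Lemma Cexp_0 : Cexp Czero = Cone.
Proof. apply Cplx_ext; simpl; rewrite exp_0; [rewrite cos_0 | rewrite sin_0]; ring. Qed.
Lemma Cexp_opp z : Cmul (Cexp z) (Cexp (Copp z)) = Cone.
Proof. rewrite <- Cexp_add, <- Cexp_0. f_equal. ring. Qed.
Lemma Cexp_neq0 z : Cexp z <> Czero.
Proof. intro H. apply Cone_neq0. rewrite <- (Cexp_opp z), H. ring. Qed.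

Lemma Cexp_opp_inv z : Cexp (Copp z) = Cinv (Cexp z).
Proof.
  transitivity (Cmul (Cmul (Cexp z) (Cexp (Copp z))) (Cinv (Cexp z))).
  - field. apply Cexp_neq0.
  - rewrite Cexp_opp. ring.
Qed.

Definition Cnat (n : nat) : Cplx := mkC (INR n) 0.

Lemma Cexp_nat_mul n z : Cexp (Cmul (Cnat n) z) = Cpow (Cexp z) n.
Proof.
  induction n; simpl Cpow.
  - rewrite <- Cexp_0. f_equal. apply Cplx_ext; simpl; ring.
  - rewrite <- IHn, <- Cexp_add. f_equal. unfold Cnat. rewrite S_INR. apply Cplx_ext; simpl; ring.
Qed.

Lemma Cexp_posQ_mul_pow p d z :
  Cpow (Cexp (Cmul (CofQ (Zpos p # d)) z)) (Pos.to_nat d) = Cpow (Cexp z) (Pos.to_nat p).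
Proof.
  rewrite <- !Cexp_nat_mul. f_equal. unfold Cnat. rewrite !INR_IPR.
  apply Cplx_ext; simpl; unfold Q2R; simpl;
    change (IZR (Z.pos p)) with (IPR p); change (IZR (Z.pos d)) with (IPR d);
    field; apply Rgt_not_eq, IPR_gt_0.
Qed.

Lemma Cexp_posQ_mul_algebraic p d z :
  is_algebraic (Cexp (Cmul (CofQ (Zpos p # d)) z)) -> is_algebraic (Cexp z).
Proof.
  intro H. apply (is_algebraic_pow _ (Pos.to_nat d)) in H. rewrite Cexp_posQ_mul_pow in H.
  destruct (Pos.to_nat p) eqn:E; [lia | exact (is_algebraic_pow_inv _ _ H)].
Qed.

Lemma Cexp_mul_rational_algebraic a z : is_rational a -> a <> Czero ->
  is_algebraic (Cexp (Cmul a z)) -> is_algebraic (Cexp z).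
Proof.
  intros [[[|p|p] d] ->] Ha H.
  - exfalso. apply Ha, CofQ_eq0. reflexivity.
  - exact (Cexp_posQ_mul_algebraic _ _ _ H).
  - apply (Cexp_posQ_mul_algebraic p d).
    replace (Cmul (CofQ (Z.pos p # d)) z) with (Copp (Cmul (CofQ (Z.neg p # d)) z)).
    + rewrite Cexp_opp_inv. apply is_algebraic_inv, H.
    + apply Cplx_ext; simpl; unfold Q2R; simpl;
        change (IZR (Z.neg p)) with (- IPR p); change (IZR (Z.pos p)) with (IPR p); ring.
Qed.
Definition monomial := (Q * list nat)%type.

Definition monomial_term (m : monomial) (xs : list Cplx) : Cplx :=
  Cmul (CofQ (fst m)) (monomial_eval (snd m) xs).

Definition mpoly_wf (n : nat) (P : list monomial) : Prop :=
  forall m, In m P -> length (snd m) = n.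

Lemma mpoly_eval_nil xs : mpoly_eval nil xs = Czero.
Proof. reflexivity. Qed.

Lemma mpoly_eval_cons m P xs :
  mpoly_eval (m :: P) xs = Cadd (monomial_term m xs) (mpoly_eval P xs).
Proof. reflexivity. Qed.

Lemma mpoly_eval_app P P' xs :
  mpoly_eval (P ++ P') xs = Cadd (mpoly_eval P xs) (mpoly_eval P' xs).
Proof.
  induction P; simpl app; [rewrite mpoly_eval_nil; ring|].
  rewrite !mpoly_eval_cons, IHP. ring.
Qed.

Lemma mpoly_wf_app n P P' : mpoly_wf n P -> mpoly_wf n P' -> mpoly_wf n (P ++ P').
Proof. intros HP HP' m Hm. apply in_app_or in Hm. destruct Hm; auto. Qed.

Lemma monomial_eval_nil xs : monomial_eval nil xs = Cone.
Proof. destruct xs; reflexivity. Qed.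

Lemma monomial_eval_cons x xs a e :
  monomial_eval (a :: e) (x :: xs) = Cmul (Cpow x a) (monomial_eval e xs).
Proof. reflexivity. Qed.

Lemma monomial_eval_zeros n xs : monomial_eval (repeat 0%nat n) xs = Cone.
Proof.
  revert xs; induction n; intros [|x xs]; try reflexivity.
  simpl repeat. rewrite monomial_eval_cons, IHn. simpl. ring.
Qed.

Fixpoint exps_add (e1 e2 : list nat) : list nat :=
  match e1, e2 with a :: e1', b :: e2' => (a + b)%nat :: exps_add e1' e2' | _, _ => nil end.

Lemma exps_add_length e1 e2 n : length e1 = n -> length e2 = n -> length (exps_add e1 e2) = n.
Proof.
  revert e2 n; induction e1; intros [|b e2] n H1 H2; simpl in *; subst; auto; discriminate.
Qed.

Lemma monomial_eval_exps_add xs e1 e2 : length e1 = length xs -> length e2 = length xs ->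
  monomial_eval (exps_add e1 e2) xs = Cmul (monomial_eval e1 xs) (monomial_eval e2 xs).
Proof.
  revert e1 e2; induction xs; intros [|a1 e1] [|a2 e2] H1 H2; simpl in *; try discriminate.
  - rewrite !monomial_eval_nil. ring.
  - rewrite !monomial_eval_cons, IHxs, Cpow_add by lia. ring.
Qed.

Definition mpoly_mul (P P' : list monomial) : list monomial :=
  flat_map (fun m => map (fun m' => ((fst m * fst m')%Q, exps_add (snd m) (snd m'))) P') P.

Lemma mpoly_wf_mul n P P' : mpoly_wf n P -> mpoly_wf n P' -> mpoly_wf n (mpoly_mul P P').
Proof.
  intros HP HP' m Hm. apply in_flat_map in Hm. destruct Hm as [m1 [H1 H2]].
  apply in_map_iff in H2. destruct H2 as [m2 [<- H3]]. apply exps_add_length; auto.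
Qed.

Lemma mpoly_eval_mul P P' xs : mpoly_wf (length xs) P -> mpoly_wf (length xs) P' ->
  mpoly_eval (mpoly_mul P P') xs = Cmul (mpoly_eval P xs) (mpoly_eval P' xs).
Proof.
  intros HP HP'. induction P as [|m P IH].
  { unfold mpoly_mul; cbn [flat_map]. rewrite !mpoly_eval_nil. ring. }
  unfold mpoly_mul; cbn [flat_map]; fold (mpoly_mul P P').
  rewrite mpoly_eval_app, IH, mpoly_eval_cons by (intros m' Hm'; apply HP; simpl; auto).
  assert (Hm : length (snd m) = length xs) by (apply HP; simpl; auto).
  enough (E : mpoly_eval (map (fun m' => ((fst m * fst m')%Q, exps_add (snd m) (snd m'))) P') xs
              = Cmul (monomial_term m xs) (mpoly_eval P' xs)) by (rewrite E; ring).
  clear IH. induction P' as [|m' P' IHP']; cbn [map]; [rewrite !mpoly_eval_nil; ring|].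
  rewrite !mpoly_eval_cons, IHP' by (intros m'' Hm''; apply HP'; simpl; auto).
  unfold monomial_term; cbn [fst snd].
  rewrite CofQ_mul, monomial_eval_exps_add by (auto; apply HP'; simpl; auto). ring.
Qed.

Definition mpoly_const (n : nat) (c : Q) : list monomial := (c, repeat 0%nat n) :: nil.

Lemma mpoly_eval_const n c xs : mpoly_eval (mpoly_const n c) xs = CofQ c.
Proof.
  unfold mpoly_const. rewrite mpoly_eval_cons, mpoly_eval_nil.
  unfold monomial_term; cbn [fst snd]. rewrite monomial_eval_zeros. ring.
Qed.

Lemma mpoly_wf_const n c : mpoly_wf n (mpoly_const n c).
Proof. intros m [<-|[]]. apply repeat_length. Qed.

Fixpoint exps_unit (n j : nat) : list nat :=
  match n, j with
  | O, _ => nil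
  | S n', O => 1%nat :: repeat 0%nat n'
  | S n', S j' => 0%nat :: exps_unit n' j'
  end.

Lemma exps_unit_length n j : length (exps_unit n j) = n.
Proof. revert j; induction n; intros [|j]; simpl; auto using repeat_length. Qed.

Lemma monomial_eval_exps_unit n j xs : length xs = n ->
  monomial_eval (exps_unit n j) xs = nth j xs Cone.
Proof.
  revert j xs; induction n; intros j [|x xs] H; simpl in H; try discriminate.
  - destruct j; reflexivity.
  - destruct j; simpl exps_unit; rewrite monomial_eval_cons.
    + rewrite monomial_eval_zeros. simpl. ring.
    + rewrite IHn by lia. simpl. ring.
Qed.

Definition mpoly_var (n j : nat) : list monomial := (1%Q, exps_unit n j) :: nil.

Lemma mpoly_eval_var n j xs : length xs = n -> mpoly_eval (mpoly_var n j) xs = nth j xs Cone.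
Proof.
  intro H. unfold mpoly_var. rewrite mpoly_eval_cons, mpoly_eval_nil.
  unfold monomial_term; cbn [fst snd]. rewrite monomial_eval_exps_unit, CofQ_1 by exact H. ring.
Qed.

Lemma mpoly_wf_var n j : mpoly_wf n (mpoly_var n j).
Proof. intros m [<-|[]]. apply exps_unit_length. Qed.

Fixpoint mpoly_pow (n : nat) (P : list monomial) (k : nat) : list monomial :=
  match k with O => mpoly_const n 1 | S k' => mpoly_mul P (mpoly_pow n P k') end.

Lemma mpoly_wf_pow n P k : mpoly_wf n P -> mpoly_wf n (mpoly_pow n P k).
Proof. intro H; induction k; simpl; auto using mpoly_wf_const, mpoly_wf_mul. Qed.

Lemma mpoly_eval_pow P k xs : mpoly_wf (length xs) P ->
  mpoly_eval (mpoly_pow (length xs) P k) xs = Cpow (mpoly_eval P xs) k.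
Proof.
  intro H; induction k; simpl; [rewrite mpoly_eval_const; apply CofQ_1|].
  rewrite mpoly_eval_mul, IHk; auto using mpoly_wf_pow.
Qed.

Fixpoint mpoly_insert (m : monomial) (P : list monomial) : list monomial :=
  match P with
  | nil => m :: nil
  | m' :: P' =>
      if list_eq_dec Nat.eq_dec (snd m) (snd m') then ((fst m + fst m')%Q, snd m') :: P'
      else m' :: mpoly_insert m P'
  end.

Definition mpoly_collect (P : list monomial) : list monomial := fold_right mpoly_insert nil P.

Definition mpoly_drop_zeros (P : list monomial) : list monomial :=
  filter (fun m => negb (Qeq_bool (fst m) 0)) P.

Definition mpoly_normalize (P : list monomial) : list monomial :=
  mpoly_drop_zeros (mpoly_collect P).

Lemma mpoly_eval_insert m P xs :
  mpoly_eval (mpoly_insert m P) xs = Cadd (monomial_term m xs) (mpoly_eval P xs).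
Proof.
  induction P as [|m' P IH]; simpl mpoly_insert; [reflexivity|].
  destruct (list_eq_dec Nat.eq_dec (snd m) (snd m')) as [E|E].
  - rewrite !mpoly_eval_cons. unfold monomial_term; cbn [fst snd]. rewrite CofQ_add, E. ring.
  - rewrite !mpoly_eval_cons, IH. ring.
Qed.

Lemma mpoly_eval_collect P xs : mpoly_eval (mpoly_collect P) xs = mpoly_eval P xs.
Proof.
  induction P; simpl mpoly_collect; [reflexivity|].
  rewrite mpoly_eval_insert, IHP. reflexivity.
Qed.

Lemma mpoly_eval_drop_zeros P xs : mpoly_eval (mpoly_drop_zeros P) xs = mpoly_eval P xs.
Proof.
  induction P as [|m P IH]; unfold mpoly_drop_zeros; simpl filter; [reflexivity|].
  fold (mpoly_drop_zeros P). destruct (Qeq_bool (fst m) 0) eqn:E; simpl negb; cbv iota.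
  - rewrite IH, mpoly_eval_cons. unfold monomial_term.
    rewrite CofQ_eq0 by (apply Qeq_bool_iff; exact E). ring.
  - rewrite !mpoly_eval_cons, IH. reflexivity.
Qed.

Lemma mpoly_insert_exps e m P :
  In e (map snd (mpoly_insert m P)) -> e = snd m \/ In e (map snd P).
Proof.
  induction P as [|m' P IH]; simpl mpoly_insert.
  - intros [H|[]]. auto.
  - destruct (list_eq_dec Nat.eq_dec (snd m) (snd m')); simpl; intros [H|H]; auto.
    destruct (IH H); auto.
Qed.

Lemma mpoly_insert_nodup m P : NoDup (map snd P) -> NoDup (map snd (mpoly_insert m P)).
Proof.
  induction P as [|m' P IH]; simpl mpoly_insert; intro H.
  - repeat constructor. intros [].
  - destruct (list_eq_dec Nat.eq_dec (snd m) (snd m')); simpl in *; auto.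
    inversion H; subst. constructor; auto.
    intro Hin. apply mpoly_insert_exps in Hin. destruct Hin; auto.
Qed.

Lemma mpoly_collect_nodup P : NoDup (map snd (mpoly_collect P)).
Proof. induction P; simpl; [constructor | apply mpoly_insert_nodup; auto]. Qed.

Lemma mpoly_drop_zeros_exps e P : In e (map snd (mpoly_drop_zeros P)) -> In e (map snd P).
Proof.
  intro H. apply in_map_iff in H. destruct H as [m [<- Hm]].
  apply filter_In in Hm. apply in_map. tauto.
Qed.

Lemma mpoly_drop_zeros_nodup P : NoDup (map snd P) -> NoDup (map snd (mpoly_drop_zeros P)).
Proof.
  induction P as [|m P IH]; intro H; unfold mpoly_drop_zeros; simpl; [constructor|].
  inversion H; subst. fold (mpoly_drop_zeros P).
  destruct (negb (Qeq_bool (fst m) 0)); simpl; auto.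
  constructor; auto. intro Hin. apply mpoly_drop_zeros_exps in Hin. auto.
Qed.

Lemma mpoly_wf_insert n m P : length (snd m) = n -> mpoly_wf n P -> mpoly_wf n (mpoly_insert m P).
Proof.
  intros Hm; induction P as [|m' P IH]; intros HP; simpl mpoly_insert.
  - intros x [<-|[]]; auto.
  - assert (HP' : mpoly_wf n P) by (intros y Hy; apply HP; simpl; auto).
    destruct (list_eq_dec Nat.eq_dec (snd m) (snd m')); intros x [<-|Hx].
    + exact (HP m' (or_introl eq_refl)).
    + exact (HP' x Hx).
    + exact (HP m' (or_introl eq_refl)).
    + exact (IH HP' x Hx).
Qed.

Lemma mpoly_wf_collect n P : mpoly_wf n P -> mpoly_wf n (mpoly_collect P).
Proof.
  induction P; intros H; simpl; [intros x []|].
  apply mpoly_wf_insert; [apply H; simpl; auto|].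
  apply IHP. intros y Hy; apply H; simpl; auto.
Qed.

Lemma not_alg_indep_of_vanishing ys P zs : mpoly_wf (length ys) P ->
  mpoly_eval P ys = Czero -> mpoly_eval P zs <> Czero -> ~ alg_indep ys.
Proof.
  intros HW H0 H1 HI. apply (HI (mpoly_normalize P)); [split; [|split]|].
  - intro E. apply H1.
    rewrite <- mpoly_eval_collect, <- mpoly_eval_drop_zeros. fold (mpoly_normalize P).
    rewrite E. reflexivity.
  - apply mpoly_drop_zeros_nodup, mpoly_collect_nodup.
  - intros m Hm. apply filter_In in Hm. destruct Hm as [Hm Hq]. split.
    + intro E. apply Qeq_bool_iff in E. rewrite E in Hq. discriminate.
    + exact (mpoly_wf_collect _ _ HW _ Hm).
  - unfold mpoly_normalize. rewrite mpoly_eval_drop_zeros, mpoly_eval_collect. exact H0.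
Qed.

Fixpoint mpoly_homog (n : nat) (p : list Q) (F G : list monomial) : list monomial :=
  match p with
  | nil => nil
  | c :: p' =>
      mpoly_mul (mpoly_const n c) (mpoly_pow n G (length p')) ++ mpoly_mul F (mpoly_homog n p' F G)
  end.

Fixpoint homog_eval (p : list Q) (f g : Cplx) : Cplx :=
  match p with
  | nil => Czero
  | c :: p' => Cadd (Cmul (CofQ c) (Cpow g (length p'))) (Cmul f (homog_eval p' f g))
  end.

Lemma mpoly_wf_homog n p F G : mpoly_wf n F -> mpoly_wf n G -> mpoly_wf n (mpoly_homog n p F G).
Proof.
  intros HF HG; induction p; cbn [mpoly_homog]; [intros x []|].
  auto using mpoly_wf_app, mpoly_wf_mul, mpoly_wf_const, mpoly_wf_pow.
Qed.

Lemma mpoly_eval_homog p F G xs : mpoly_wf (length xs) F -> mpoly_wf (length xs) G ->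
  mpoly_eval (mpoly_homog (length xs) p F G) xs = homog_eval p (mpoly_eval F xs) (mpoly_eval G xs).
Proof.
  intros HF HG; induction p; cbn [mpoly_homog homog_eval]; [reflexivity|].
  rewrite mpoly_eval_app, !mpoly_eval_mul, mpoly_eval_const, mpoly_eval_pow, IHp;
    auto using mpoly_wf_homog, mpoly_wf_const, mpoly_wf_pow.
Qed.

Lemma homog_eval_mul p k g :
  homog_eval p (Cmul k g) g = Cmul (Cpow g (pred (length p))) (poly_eval p k).
Proof.
  induction p as [|c p IH]; [simpl; ring|].
  cbn [homog_eval]. destruct p as [|c' p']; [simpl; ring|].
  rewrite IH. simpl length. cbn [pred poly_eval Cpow]. ring.
Qed.

(** If [F = k G] at [ys] with [k] a root of [p], then the homogenisation of [p] at [(F, G)]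
    vanishes at [ys]; it is nonzero because [(F, G)] takes the value [(t, 1)] for every [t]. *)
Lemma not_alg_indep_of_algebraic_ratio ys k F G :
  is_algebraic k -> mpoly_wf (length ys) F -> mpoly_wf (length ys) G ->
  mpoly_eval F ys = Cmul k (mpoly_eval G ys) ->
  (forall t, exists zs, length zs = length ys /\ mpoly_eval F zs = t /\ mpoly_eval G zs = Cone) ->
  ~ alg_indep ys.
Proof.
  intros [p [Hp Hpk]] HF HG HFG Hz.
  destruct (exists_not_root p Hp) as [t Ht].
  destruct (Hz t) as [zs [Hl [HFz HGz]]].
  apply (not_alg_indep_of_vanishing ys (mpoly_homog (length ys) p F G) zs).
  - apply mpoly_wf_homog; auto.
  - rewrite mpoly_eval_homog, HFG, homog_eval_mul, Hpk by auto. ring.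
  - rewrite <- Hl, mpoly_eval_homog, HFz, HGz by (rewrite Hl; auto).
    replace t with (Cmul t Cone) at 1 by ring.
    rewrite homog_eval_mul, Cpow_one. intro E. apply Ht. rewrite <- E. ring.
Qed.

Fixpoint mpoly_vars_prod (n : nat) (is : list nat) : list monomial :=
  match is with
  | nil => mpoly_const n 1
  | i :: is' => mpoly_mul (mpoly_var n i) (mpoly_vars_prod n is')
  end.

Definition entries_prod (is : list nat) (xs : list Cplx) : Cplx :=
  fold_right (fun i acc => Cmul (nth i xs Cone) acc) Cone is.

Lemma mpoly_wf_vars_prod n is : mpoly_wf n (mpoly_vars_prod n is).
Proof.
  induction is; cbn [mpoly_vars_prod]; auto using mpoly_wf_const, mpoly_wf_mul, mpoly_wf_var.
Qed.

Lemma mpoly_eval_vars_prod is xs :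
  mpoly_eval (mpoly_vars_prod (length xs) is) xs = entries_prod is xs.
Proof.
  induction is as [|i is IH]; cbn [mpoly_vars_prod entries_prod fold_right].
  - rewrite mpoly_eval_const. apply CofQ_1.
  - rewrite mpoly_eval_mul, mpoly_eval_var, IH; auto using mpoly_wf_var, mpoly_wf_vars_prod.
Qed.

Fixpoint unit_point (n j : nat) (t : Cplx) : list Cplx :=
  match n, j with
  | O, _ => nil
  | S n', O => t :: repeat Cone n'
  | S n', S j' => Cone :: unit_point n' j' t
  end.

Lemma unit_point_length n j t : length (unit_point n j t) = n.
Proof. revert j; induction n; intros [|j]; simpl; auto. rewrite repeat_length; auto. Qed.

Lemma unit_point_nth n j t i : (j < n)%nat ->
  nth i (unit_point n j t) Cone = if Nat.eqb i j then t else Cone.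
Proof.
  revert j i; induction n; intros j i H; [lia|].
  destruct j as [|j], i as [|i]; simpl; auto using nth_repeat with arith.
Qed.

Lemma entries_prod_unit_point is n j t : (j < n)%nat -> ~ In j is ->
  entries_prod is (unit_point n j t) = Cone.
Proof.
  intros Hj. induction is as [|i is IH]; simpl; intros Hin; [reflexivity|].
  rewrite unit_point_nth, IH by auto.
  destruct (Nat.eqb_spec i j); [exfalso; auto | ring].
Qed.

(** [y_j] must not occur in the products: nontriviality is witnessed at the point with
    [t - r] in position [j] and [1] elsewhere. *)
Lemma not_alg_indep_shifted_ratio ys j r k is is' :
  (j < length ys)%nat -> ~ In j (is ++ is') -> is_algebraic k ->
  Cmul (Cadd (nth j ys Cone) (CofQ r)) (entries_prod is ys) = Cmul k (entries_prod is' ys) ->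
  ~ alg_indep ys.
Proof.
  intros Hj Hnotin Hk E. set (n := length ys).
  assert (Hwf : mpoly_wf n (mpoly_var n j ++ mpoly_const n r))
    by (apply mpoly_wf_app; [apply mpoly_wf_var | apply mpoly_wf_const]).
  apply (not_alg_indep_of_algebraic_ratio ys k
           (mpoly_mul (mpoly_var n j ++ mpoly_const n r) (mpoly_vars_prod n is))
           (mpoly_vars_prod n is')); auto using mpoly_wf_mul, mpoly_wf_vars_prod.
  - unfold n. rewrite mpoly_eval_mul, mpoly_eval_app, mpoly_eval_var, mpoly_eval_const,
      !mpoly_eval_vars_prod; auto using mpoly_wf_vars_prod.
  - intro t. set (zs := unit_point n j (Cadd t (CofQ (- r)))).
    assert (Hzs : length zs = n) by apply unit_point_length.
    exists zs. split; [exact Hzs|]. rewrite <- Hzs.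
    rewrite mpoly_eval_mul, mpoly_eval_app, mpoly_eval_var, mpoly_eval_const,
      !mpoly_eval_vars_prod by (rewrite Hzs; auto using mpoly_wf_vars_prod).
    unfold zs. rewrite unit_point_nth, Nat.eqb_refl, !entries_prod_unit_point, CofQ_opp
      by (auto; intro; apply Hnotin, in_or_app; auto).
    split; ring.
Qed.

Lemma Ceq_of_linear_combination c X Y Z W :
  Z = W -> Csub X Y = Cmul c (Csub Z W) -> X = Y.
Proof.
  intros E H. rewrite E in H. replace X with (Cadd (Csub X Y) Y) by ring. rewrite H. ring.
Qed.

Ltac linear_combination E c :=
  apply (Ceq_of_linear_combination c _ _ _ _ E); field; auto.

Lemma irrational_neq0 z : ~ is_rational z -> z <> Czero.
Proof. intros H E. apply H. exists 0%Q. rewrite E, CofQ_0. reflexivity. Qed.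

Lemma irrational_Q_comb_eq0 z q1 q2 : ~ is_rational z ->
  Cadd (CofQ q1) (Cmul (CofQ q2) z) = Czero -> (q1 == 0)%Q /\ (q2 == 0)%Q.
Proof.
  intros Hz E. destruct (Qeq_dec q2 0) as [H2|H2].
  - split; [|exact H2]. apply CofQ_inj. rewrite CofQ_0, <- E, (CofQ_eq0 q2 H2). ring.
  - exfalso. apply Hz. exists (- q1 / q2)%Q.
    assert (Hq2 := CofQ_neq0 _ H2).
    unfold Qdiv. rewrite CofQ_mul, CofQ_opp, CofQ_inv by exact H2.
    linear_combination E (Cinv (CofQ q2)).
Qed.

Lemma Q_lin_indep_2 x1 x2 :
  (forall q1 q2, Cadd (Cmul (CofQ q1) x1) (Cmul (CofQ q2) x2) = Czero ->
     (q1 == 0)%Q /\ (q2 == 0)%Q) ->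
  Q_lin_indep (x1 :: x2 :: nil).
Proof.
  intros H qs Hl E q Hq. destruct qs as [|q1 [|q2 [|]]]; simpl in Hl; try discriminate.
  unfold Csum in E. cbn [combine map fold_right fst snd] in E.
  destruct (H q1 q2) as [H1 H2]; [rewrite <- E; ring|].
  destruct Hq as [<-|[<-|[]]]; assumption.
Qed.

Lemma Q_lin_indep_3 x1 x2 x3 :
  (forall q1 q2 q3,
     Cadd (Cmul (CofQ q1) x1) (Cadd (Cmul (CofQ q2) x2) (Cmul (CofQ q3) x3)) = Czero ->
     (q1 == 0)%Q /\ (q2 == 0)%Q /\ (q3 == 0)%Q) ->
  Q_lin_indep (x1 :: x2 :: x3 :: nil).
Proof.
  intros H qs Hl E q Hq. destruct qs as [|q1 [|q2 [|q3 [|]]]]; simpl in Hl; try discriminate.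
  unfold Csum in E. cbn [combine map fold_right fst snd] in E.
  destruct (H q1 q2 q3) as [H1 [H2 H3]]; [rewrite <- E; ring|].
  destruct Hq as [<-|[<-|[<-|[]]]]; assumption.
Qed.

Lemma not_Q_lin_indep_4 x1 x2 x3 x4 : ~ Q_lin_indep (x1 :: x2 :: x3 :: x4 :: nil) ->
  exists q1 q2 q3 q4,
    Cadd (Cmul (CofQ q1) x1)
      (Cadd (Cmul (CofQ q2) x2) (Cadd (Cmul (CofQ q3) x3) (Cmul (CofQ q4) x4))) = Czero /\
    ~ ((q1 == 0)%Q /\ (q2 == 0)%Q /\ (q3 == 0)%Q /\ (q4 == 0)%Q).
Proof.
  intro Hn. apply NNPP. intro Hc. apply Hn.
  intros qs Hl E q Hq. destruct qs as [|q1 [|q2 [|q3 [|q4 [|]]]]]; simpl in Hl; try discriminate.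
  unfold Csum in E. cbn [combine map fold_right fst snd] in E.
  apply NNPP. intro Hq0. apply Hc. exists q1, q2, q3, q4. split.
  - rewrite <- E. ring.
  - intros (H1 & H2 & H3 & H4). apply Hq0.
    destruct Hq as [<-|[<-|[<-|[<-|[]]]]]; assumption.
Qed.

(** Refuting [trdeg_ge S n] for an explicit list [S]: enumerate every choice of [n]
    generators and exhibit an algebraic dependence among them, either an algebraic or
    repeated entry, or one of the relations supplied by [hints]. *)

Ltac index_of t l :=
  lazymatch l with
  | t :: _ => constr:(O)
  | _ :: ?r => let n := index_of t r in constr:(S n)
  end.

Ltac indices_of ts l :=
  lazymatch ts with
  | nil => constr:(@nil nat)
  | ?t :: ?r => let i := index_of t l in let is := indices_of r l in constr:(i :: is)
  end.

Ltac apply_shifted_ratio Hind j r k is is' eqtac :=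
  lazymatch type of Hind with
  | alg_indep ?ys =>
      apply (not_alg_indep_shifted_ratio ys j r k is is');
      [ simpl; lia | simpl; lia | solve_algebraic
      | cbn [nth entries_prod fold_right]; rewrite ?CofQ_0; eqtac | exact Hind ]
  end.

Ltac refute_shifted_ratio Hind y r ws k ws' eqtac :=
  lazymatch type of Hind with
  | alg_indep ?ys =>
      let j := index_of y ys in let is := indices_of ws ys in let is' := indices_of ws' ys in
      apply_shifted_ratio Hind j r k is is' eqtac
  end.

Ltac refute_ratio Hind y k ws' eqtac :=
  refute_shifted_ratio Hind y 0%Q (@nil Cplx) k ws' eqtac.

Ltac refute_algebraic_entry Hind :=
  match goal with
  | Ha : is_algebraic ?t |- _ => refute_ratio Hind t t (@nil Cplx) ltac:(ring)
  end.

Ltac refute_duplicate Hind :=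
  lazymatch type of Hind with
  | alg_indep ?ys =>
      match ys with
      | context [?x :: ?rest] =>
          let i := index_of x ys in let d := index_of x rest in
          let j := eval cbv in (S (i + d))%nat in
          apply_shifted_ratio Hind j 0%Q Cone (@nil nat) (i :: nil) ltac:(ring)
      end
  end.

Ltac destruct_by_length ys Hlen :=
  lazymatch type of Hlen with
  | length _ = O => destruct ys; [clear Hlen | discriminate Hlen]
  | length _ = S _ =>
      let y := fresh "y" in
      destruct ys as [|y ys]; [discriminate Hlen | cbn [length] in Hlen; injection Hlen as Hlen];
      destruct_by_length ys Hlen
  end.

Ltac case_member Hy Hind :=
  lazymatch type of Hy with
  | In _ nil => destruct Hy
  | In _ (_ :: _) =>
      destruct Hy as [<- | Hy]; [try refute_algebraic_entry Hind | case_member Hy Hind]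
  end.

Ltac case_members Hsub Hind :=
  lazymatch type of Hsub with
  | forall y, In y nil -> _ => clear Hsub
  | forall y, In y (?y0 :: ?rest) -> In y ?S =>
      let Hy := fresh "Hy" in let Hsub' := fresh "Hsub" in
      assert (Hy : In y0 S) by (apply Hsub; left; reflexivity);
      assert (Hsub' : forall y, In y rest -> In y S) by (intros; apply Hsub; right; assumption);
      clear Hsub; case_member Hy Hind; case_members Hsub' Hind
  end.

Ltac refute_trdeg Htr hints :=
  let ys := fresh "ys" in let Hlen := fresh "Hlen" in
  let Hsub := fresh "Hsub" in let Hind := fresh "Hind" in
  destruct Htr as [ys [Hlen [Hsub Hind]]];
  cbn [app map length] in Hlen, Hsub;
  destruct_by_length ys Hlen;
  case_members Hsub Hind;
  first [refute_duplicate Hind | hints Hind].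

Lemma Schanuel_Gelfond_Schneider (Sch : Schanuel) a L :
  is_algebraic a -> ~ is_rational a -> L <> Czero ->
  is_algebraic (Cexp L) -> ~ is_algebraic (Cexp (Cmul a L)).
Proof.
  intros Ha Hr HL Hb Hc. assert (Ha0 := irrational_neq0 _ Hr).
  assert (HI : Q_lin_indep (L :: Cmul a L :: nil)).
  { apply Q_lin_indep_2. intros q1 q2 E. apply (irrational_Q_comb_eq0 a); auto.
    apply (Cmul_eq0 _ L HL). rewrite <- E. ring. }
  refute_trdeg (Sch _ HI) ltac:(fun H => first
    [ refute_ratio H (Cmul a L) a (L :: nil) ltac:(ring)
    | refute_ratio H L (Cinv a) (Cmul a L :: nil) ltac:(field; auto) ]).
Qed.

Section MixedCase.

Hypothesis Sch : Schanuel.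
Variables L A : Cplx.
Local Notation a := (Cexp A).
Local Notation b := (Cexp L).
Hypotheses (HL : L <> Czero) (HA : A <> Czero).
Hypotheses (Ha : is_algebraic a) (Hr : ~ is_rational a) (Hb : ~ is_algebraic b).
Hypotheses (Hc : is_algebraic (Cexp (Cmul a L))) (Hd : is_algebraic (Cexp (Cmul b A))).

Let Ha0 : a <> Czero := Cexp_neq0 A.

Lemma irrational_comb_mul_eq0 q1 q2 z : z <> Czero ->
  Cmul (Cadd (CofQ q1) (Cmul (CofQ q2) a)) z = Czero -> (q1 == 0)%Q /\ (q2 == 0)%Q.
Proof. intros Hz E. apply (irrational_Q_comb_eq0 a); auto. exact (Cmul_eq0 _ _ Hz E). Qed.

Lemma mixed_case_proportional lambda : is_algebraic lambda -> A = Cmul lambda L -> False.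
Proof.
  intros Hl EA. assert (Hl0 : lambda <> Czero) by (intro Z; apply HA; rewrite EA, Z; ring).
  assert (HI : Q_lin_indep (L :: Cmul a L :: Cmul b A :: nil)).
  { apply Q_lin_indep_3. intros s1 s2 s3 E.
    destruct (Qeq_dec s3 0) as [Z3|Z3].
    - rewrite (CofQ_eq0 _ Z3) in E. destruct (irrational_comb_mul_eq0 s1 s2 L) as [Z1 Z2]; auto.
      rewrite <- E. ring.
    - exfalso. apply Hb. assert (HZ3 := CofQ_neq0 _ Z3).
      rewrite EA in E at 2. (* the factor of [b A], not the [A] inside [a = e^A] *)
      replace b with (Cdiv (Copp (Cadd (CofQ s1) (Cmul (CofQ s2) a))) (Cmul (CofQ s3) lambda))
        by (symmetry; linear_combination E (Cinv (Cmul (Cmul (CofQ s3) lambda) L))).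
      solve_algebraic. }
  refute_trdeg (Sch _ HI) ltac:(fun H => first
    [ refute_ratio H (Cmul a L) (Cexp A) (L :: nil) ltac:(ring)
    | refute_ratio H L (Cinv a) (Cmul a L :: nil) ltac:(field; auto)
    | refute_ratio H (Cmul b A) lambda (b :: L :: nil) ltac:(linear_combination EA (Cexp L))
    | refute_ratio H (Cmul b A) (Cdiv lambda a) (b :: Cmul a L :: nil)
        ltac:(linear_combination EA (Cexp L)) ]).
Qed.

Lemma mixed_case_shifted r kappa : is_algebraic kappa ->
  Cmul (Cadd b (CofQ r)) A = Cmul kappa L -> False.
Proof.
  intros Hk EQ.
  assert (HI : Q_lin_indep (L :: Cmul a L :: A :: nil)).
  { apply Q_lin_indep_3. intros s1 s2 s3 E.
    destruct (Qeq_dec s3 0) as [Z3|Z3].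
    - rewrite (CofQ_eq0 _ Z3) in E. destruct (irrational_comb_mul_eq0 s1 s2 L) as [Z1 Z2]; auto.
      rewrite <- E. ring.
    - exfalso. assert (HZ3 := CofQ_neq0 _ Z3).
      apply (mixed_case_proportional (Cdiv (Copp (Cadd (CofQ s1) (Cmul (CofQ s2) a))) (CofQ s3)));
        [solve_algebraic | linear_combination E (Cinv (CofQ s3))]. }
  refute_trdeg (Sch _ HI) ltac:(fun H => first
    [ refute_ratio H (Cmul a L) (Cexp A) (L :: nil) ltac:(ring)
    | refute_ratio H L (Cinv a) (Cmul a L :: nil) ltac:(field; auto)
    | refute_shifted_ratio H (Cexp L) r (A :: nil) kappa (L :: nil)
        ltac:(linear_combination EQ Cone)
    | refute_shifted_ratio H (Cexp L) r (A :: nil) (Cdiv kappa a) (Cmul a L :: nil)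
        ltac:(linear_combination EQ Cone) ]).
Qed.

Lemma mixed_case_independent : Q_lin_indep (L :: Cmul a L :: A :: Cmul b A :: nil) -> False.
Proof.
  intro HI.
  refute_trdeg (Sch _ HI) ltac:(fun H => first
    [ refute_ratio H (Cmul a L) (Cexp A) (L :: nil) ltac:(ring)
    | refute_ratio H L (Cinv a) (Cmul a L :: nil) ltac:(field; auto)
    | refute_ratio H (Cmul b A) Cone (b :: A :: nil) ltac:(ring) ]).
Qed.

Lemma Schanuel_mixed_exponentials : False.
Proof.
  destruct (classic (Q_lin_indep (L :: Cmul a L :: A :: Cmul b A :: nil))) as [HI|HD];
    [exact (mixed_case_independent HI)|].
  destruct (not_Q_lin_indep_4 _ _ _ _ HD) as (q1 & q2 & q3 & q4 & E & NZ).
  pose (u := Cadd (CofQ q1) (Cmul (CofQ q2) a)).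
  assert (Hu : is_algebraic u) by (unfold u; solve_algebraic).
  destruct (Qeq_dec q4 0) as [Z4|Z4]; [destruct (Qeq_dec q3 0) as [Z3|Z3]|].
  - apply NZ. rewrite (CofQ_eq0 _ Z3), (CofQ_eq0 _ Z4) in E.
    destruct (irrational_comb_mul_eq0 q1 q2 L) as [Z1 Z2]; auto. rewrite <- E. ring.
  - rewrite (CofQ_eq0 _ Z4) in E. assert (HZ3 := CofQ_neq0 _ Z3).
    apply (mixed_case_proportional (Cdiv (Copp u) (CofQ q3)));
      [solve_algebraic | unfold u; linear_combination E (Cinv (CofQ q3))].
  - assert (HZ4 := CofQ_neq0 _ Z4).
    apply (mixed_case_shifted (q3 / q4) (Cdiv (Copp u) (CofQ q4))); [solve_algebraic|].
    unfold u, Qdiv. rewrite CofQ_mul, CofQ_inv by exact Z4.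
    linear_combination E (Cinv (CofQ q4)).
Qed.

End MixedCase.

Theorem mainTheorem3 :
  Schanuel ->
  forall alpha beta gamma log_a log_b : Cplx,
    alpha <> Czero -> beta <> Czero -> gamma <> Czero -> alpha <> Cone ->
    Cexp log_a = alpha -> Cexp log_b = beta ->
    Cexp (Cmul gamma log_b) <> Cone ->
    (~ is_rational alpha \/ ~ is_rational (Cexp (Cmul gamma log_b))) ->
    (is_algebraic alpha \/ is_algebraic (Cexp (Cmul gamma log_b))) ->
    is_algebraic (Cexp (Cmul (Cmul gamma alpha) log_b)) ->
    ~ is_algebraic (Cexp (Cmul (Cexp (Cmul gamma log_b)) log_a)).
Proof.
  intros Sch alpha beta gamma A log_b _ _ _ Ha1 <- _ Hb1 Hirr Halg Hc Hd.
  set (L := Cmul gamma log_b) in *.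
  replace (Cmul (Cmul gamma (Cexp A)) log_b) with (Cmul (Cexp A) L) in Hc by (unfold L; ring).
  assert (HL : L <> Czero) by (intro Z; apply Hb1; rewrite Z; apply Cexp_0).
  assert (HA : A <> Czero) by (intro Z; apply Ha1; rewrite Z; apply Cexp_0).
  destruct (classic (is_algebraic (Cexp A))) as [Ha|Ha],
    (classic (is_algebraic (Cexp L))) as [Hb|Hb].
  - destruct Hirr as [Hr|Hr].
    + exact (Schanuel_Gelfond_Schneider Sch _ _ Ha Hr HL Hb Hc).
    + exact (Schanuel_Gelfond_Schneider Sch _ _ Hb Hr HA Ha Hd).
  - apply (Schanuel_mixed_exponentials Sch L A); auto.
    intro Hr. exact (Hb (Cexp_mul_rational_algebraic _ _ Hr (Cexp_neq0 A) Hc)).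
  - apply (Schanuel_mixed_exponentials Sch A L); auto.
    intro Hr. exact (Ha (Cexp_mul_rational_algebraic _ _ Hr (Cexp_neq0 L) Hd)).
  - destruct Halg; contradiction.
Qed.
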